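(* Let $G=\mathrm{GL}_n$ over $L$ with diagonal torus $T$ and upper triangular Borel $B$, and let $Q=M\ltimes N$, $Q'=M'\ltimes N'$ be standard parabolic subgroups. Let $\nu\in X_*(Z_{M'})$ be a $B$-dominant cocharacter and let $w\in{}^{Q'}W^{Q}$. Put $Q^M_{w^{-1}}=M\cap w^{-1}Q'w$, a standard parabolic subgroup of $M$ with Levi $M_{w^{-1}}$, and $Q^{M'}_w=M'\cap wQw^{-1}$ with Levi $M'_w$. Then $w^{-1}\nu\in X_*(Z_{M_{w^{-1}}})$ and it is $(B\cap M)$-dominant. In particular the isomorphism $M'_w(L)\to M_{w^{-1}}(L)$, $m\mapsto w^{-1}mw$, maps $Z_{M'}^+$ into $Z_{M_{w^{-1}}}^+$.
   Context: $L/\mathbf Q_p$ finite with ring of integers $\mathcal O_L$ and uniformiser $\varpi_L$. $W$ is the Weyl group of $(G,T)$, $W_Q$ the Weyl group of $M$, and ${}^{Q'}W^Q$ the set of minimal length representatives of $W_{Q'}\backslash W/W_Q$. For a parabolic $P=M_P\ltimes N_P$ (of $G$ or of a Levi subgroup, standard with respect to the relevant Borel), $Z_{M_P}^+=\{z\in Z_{M_P}(L): zN_P(\mathcal O_L)z^{-1}\subset N_P(\mathcal O_L),\ z^{-1}\overline N_P^1z\subset\overline N_P^1\}$, where $\overline N_P^1$ is the kernel of reduction mod $\varpi_L$ on the opposite unipotent radical; $Z_{M_{w^{-1}}}^+$ is taken with respect to the parabolic $Q^M_{w^{-1}}$ of $M$. *)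

From HB Require Import structures.
From mathcomp Require Import all_boot all_order all_algebra all_fingroup.
Set Implicit Arguments. Unset Strict Implicit. Unset Printing Implicit Defensive.
Import Order.TTheory GRing.Theory Num.Theory.
Local Open Scope ring_scope.

(* Simple roots: alpha_k = e_k - e_{k+1}, indexed by k : 'I_n.-1.
   A standard parabolic / standard Levi is given by a set J of simple roots.
   Weyl group W = 'S_n; w acts on the permutation matrix side by
   w e_j = e_{w j}.  Cocharacters of T are X_*(T) = Z^n, nu : 'I_n -> int,
   nu(t) = diag(t^{nu_i}). *)

(* i and j lie in the same block of the standard Levi M_J *)
Definition blk (n : nat) (J : {set 'I_n.-1}) (i j : 'I_n) : bool :=
  [forall k : 'I_n.-1, ((minn i j <= k)%N && (k < maxn i j)%N) ==> (k \in J)].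

(* Weyl group W_J of M_J : permutation (matrices) lying in M_J *)
Definition Wgrp (n : nat) (J : {set 'I_n.-1}) : {set 'S_n} :=
  [set s : 'S_n | [forall i, blk J i (s i)]].

Definition len (n : nat) (w : 'S_n) : nat :=
  #|[set p : 'I_n * 'I_n | (p.1 < p.2)%N && (w p.2 < w p.1)%N]|.

(* ^{Q'}W^{Q}: minimal length representatives of W_{Q'} \ W / W_Q.
   In mathcomp (v * w * u) x = u (w (v x)), i.e. the function u o w o v,
   u in W_{Q'} on the left, v in W_Q on the right. *)
Definition minDCR (n : nat) (J' J : {set 'I_n.-1}) : {set 'S_n} :=
  [set w : 'S_n | [forall u in Wgrp J', forall v in Wgrp J,
                     (len w <= len (v * w * u)%g)%N]].

(* action of W on X_*(T): (w nu)(t) = w nu(t) w^{-1}, (w nu)_i = nu_{w^{-1} i} *)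
Definition cochar_act (n : nat) (w : 'S_n) (nu : 'I_n -> int) : 'I_n -> int :=
  fun i => nu ((w^-1)%g i).

(* nu in X_*(Z_M), M the standard Levi with block relation S *)
Definition cochar_in_center (n : nat) (S : rel 'I_n) (nu : 'I_n -> int) : Prop :=
  forall i j, S i j -> nu i = nu j.

(* dominance w.r.t. the Borel B \cap M (M with block relation R):
   <alpha, nu> >= 0 for the positive roots e_i - e_j (i < j) of M *)
Definition dominant (n : nat) (R : rel 'I_n) (nu : 'I_n -> int) : Prop :=
  forall i j : 'I_n, (i < j)%N -> R i j -> nu j <= nu i.

(* the block relation of M_{w^{-1}} = M \cap w^{-1} M' w *)
Definition Mw_rel (n : nat) (J J' : {set 'I_n.-1}) (w : 'S_n) : rel 'I_n :=
  fun i j => blk J i j && blk J' (w i) (w j).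

(* abstract discretely valued field data: O is a discrete valuation ring of L
   with uniformiser pi *)
Definition is_dvr (L : fieldType) (O : {pred L}) (pi : L) : Prop :=
  [/\ 0 \in O, 1 \in O,
      (forall x y, x \in O -> y \in O -> x + y \in O),
      (forall x, x \in O -> - x \in O) &
      (forall x y, x \in O -> y \in O -> x * y \in O)] /\
  [/\ pi \in O, pi^-1 \notin O &
      (forall x, x != 0 -> exists k : int, exists u,
         [/\ u \in O, u^-1 \in O & x = pi ^ k * u])].

(* Parabolic P inside the Levi with block relation R (R = all for G),
   standard w.r.t. B, with Levi block relation S (S refines R). *)
Definition Nrad (L : fieldType) (n : nat) (R S : rel 'I_n) (O : {pred L})
  (X : 'M[L]_n) : Prop :=
  forall i j : 'I_n,
    if i == j then X i j = 1
    else if [&& (i < j)%N, R i j & ~~ S i j] then is_true (X i j \in O) else X i j = 0.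

(* \bar N_P^1 : kernel of reduction mod pi on \bar N_P(O_L) *)
Definition Nbar1 (L : fieldType) (n : nat) (R S : rel 'I_n) (O : {pred L})
  (pi : L) (Y : 'M[L]_n) : Prop :=
  forall i j : 'I_n,
    if i == j then Y i j = 1
    else if [&& (j < i)%N, R i j & ~~ S i j]
         then exists y, y \in O /\ Y i j = pi * y
         else Y i j = 0.

Definition Zcenter (L : fieldType) (n : nat) (S : rel 'I_n) (z : 'M[L]_n) : Prop :=
  [/\ (forall i j : 'I_n, i != j -> z i j = 0), z \in unitmx &
      (forall i j : 'I_n, S i j -> z i i = z j j)].

Definition Zplus (L : fieldType) (n : nat) (R S : rel 'I_n) (O : {pred L})
  (pi : L) (z : 'M[L]_n) : Prop :=
  [/\ Zcenter S z,
      (forall X, Nrad R S O X -> Nrad R S O (z *m X *m invmx z)) &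
      (forall Y, Nbar1 R S O pi Y -> Nbar1 R S O pi (invmx z *m Y *m z))].

Definition pmx (L : fieldType) (n : nat) (w : 'S_n) : 'M[L]_n :=
  \matrix_(i, j) (i == w j)%:R.

Definition conj_inv (L : fieldType) (n : nat) (w : 'S_n) (m : 'M[L]_n) : 'M[L]_n :=
  invmx (pmx L w) *m m *m pmx L w.

From HB Require Import structures.
From mathcomp Require Import all_boot all_order all_algebra all_fingroup.
From mathcomp Require Import zify.
Import Order.TTheory GRing.Theory Num.Theory.
Local Open Scope ring_scope.
Set Implicit Arguments. Unset Strict Implicit.

(* An element w of ^{Q'}W^{Q} is increasing on every block of M: otherwise an
   adjacent transposition s in W_Q is a descent of w, and w s is a shorter
   element of the same double coset.  As (w^{-1} nu)_i = nu_{w i}, this gives the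
   (B \cap M)-dominance of w^{-1} nu, while its centrality in M_{w^{-1}} comes
   from that of nu in M'.
   For a diagonal z in Z_{M_P}, each of the two contraction conditions defining
   Z_{M_P}^+ amounts to z_i / z_j \in O_L for every root e_i - e_j (i < j) of N_P.
   Conjugation by w permutes the diagonal entries, and w sends each such root of
   the radical of Q^M_{w^{-1}} to the positive root e_{w i} - e_{w j}, which lies
   outside M'; so the condition for z gives the one for w^{-1} z w. *)

Section MinimalRepresentatives.
Variable n : nat.
Implicit Types (J : {set 'I_n.-1}) (w : 'S_n).

Lemma blk_sym J : symmetric (blk J).
Proof. by move=> i j; rewrite /blk minnC maxnC. Qed.

Lemma blk_refl J i : blk J i i.
Proof. by apply/forallP => k; rewrite minnn maxnn; apply/implyP; lia. Qed.

Lemma blk_sub J (i j k l : 'I_n) :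
  (i <= k)%N -> (k <= l)%N -> (l <= j)%N -> blk J i j -> blk J k l.
Proof.
move=> ik kl lj /forallP bij; apply/forallP => x; apply/implyP => xkl.
by apply: (implyP (bij x)); lia.
Qed.

Lemma Wgrp1 J : 1%g \in Wgrp J.
Proof. by rewrite inE; apply/forallP => x; rewrite perm1 blk_refl. Qed.

Lemma tperm_Wgrp J a b : blk J a b -> tperm a b \in Wgrp J.
Proof.
move=> ab; rewrite inE; apply/forallP => x.
by case: tpermP => [->|->|_ _]; rewrite ?blk_refl // blk_sym.
Qed.

Lemma adjacent_tperm_lt (a b x y : 'I_n) : b = a.+1 :> nat ->
  (x < y)%N -> (x, y) != (a, b) -> (tperm a b x < tperm a b y)%N.
Proof.
move=> ab xy; rewrite xpair_eqE !permE /= !(fun_if val) -!val_eqE /=.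
by repeat case: eqP; lia.
Qed.

Lemma len_tperm_descent w (a b : 'I_n) : b = a.+1 :> nat ->
  (w b < w a)%N -> (len (tperm a b * w) < len w)%N.
Proof.
move=> ab wba; rewrite /len; set s := tperm a b.
set Inv_sw := [set p | _]; set Inv_w := [set p | _].
(* (x, y) |-> (s x, s y) injects the inversions of w s into those of w but (a, b). *)
pose ss (p : 'I_n * 'I_n) := (s p.1, s p.2).
have ss_inj : injective ss by move=> [x1 x2] [y1 y2] [/perm_inj-> /perm_inj->].
have ab_inv : (a, b) \in Inv_w by rewrite inE /= wba; lia.
suff : (#|ss @: Inv_sw| <= #|Inv_w :\ (a, b)|)%N.
  by rewrite card_imset // (cardsD1 (a, b) Inv_w) ab_inv; lia.
apply/subset_leq_card/subsetP => _ /imsetP[[x y] + ->].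
rewrite !inE /= !permM => /andP[xy wsyx].
have xy_ab : (x, y) != (a, b).
  by apply: (contraTneq _ wsyx) => -[-> ->]; rewrite /s tpermL tpermR -leqNgt ltnW.
rewrite /ss /= wsyx adjacent_tperm_lt // !andbT; apply: (contraTneq _ xy) => -[sxa syb].
by rewrite -(tpermK a b x) -(tpermK a b y) -/s sxa syb /s tpermL tpermR ab -leqNgt.
Qed.

Lemma minDCR_adjacent (J' J : {set 'I_n.-1}) w (a b : 'I_n) :
  w \in minDCR J' J -> b = a.+1 :> nat -> blk J a b -> (w a < w b)%N.
Proof.
move=> wmin ab blk_ab; case: ltngtP => // [wba|/val_inj/perm_inj eab]; last first.
  by move: ab; rewrite eab; lia.
move: wmin; rewrite inE => /forall_inP/(_ 1%g (Wgrp1 J'))/forall_inP.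
move=> /(_ _ (tperm_Wgrp blk_ab)); rewrite mulg1 leqNgt.
by rewrite len_tperm_descent.
Qed.

Lemma minDCR_increasing (J' J : {set 'I_n.-1}) w (i j : 'I_n) :
  w \in minDCR J' J -> (i < j)%N -> blk J i j -> (w i < w j)%N.
Proof.
move=> wmin ij blk_ij.
pose f m := nat_of_ord (w (insubd i m)).
pose D := [pred m | (i <= m <= j)%N].
have insubdE m : m \in D -> nat_of_ord (insubd i m) = m.
  rewrite inE val_insubd; case: ifP => //; have := ltn_ord j; lia.
have f_step : {in D, forall m, m.+1 \in D -> (f m < f m.+1)%N}.
  move=> m mD m1D; apply: minDCR_adjacent wmin _ _; first by rewrite !insubdE.
  by apply: (blk_sub _ _ _ blk_ij); rewrite ?insubdE //; move: mD m1D; rewrite !inE; lia.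
have D_convex : {in D &, forall a b k, (a < k < b)%N -> k \in D}.
  by move=> a b + + k; rewrite !inE; lia.
have [iD jD] : nat_of_ord i \in D /\ nat_of_ord j \in D by rewrite !inE; lia.
by have := homo_ltn_in (@ltn_trans) D_convex f_step iD jD ij; rewrite /f !valKd.
Qed.

End MinimalRepresentatives.

Section DiagonalConjugation.
Variables (L : fieldType) (n : nat).
Implicit Types (d : 'rV[L]_n) (z X : 'M[L]_n).

Lemma diag_mx_of_diagonal z :
  (forall i j, i != j -> z i j = 0) -> z = diag_mx (\row_i z i i).
Proof.
move=> zd; apply/matrixP => i j; rewrite !mxE.
by case: eqVneq => [->|/zd->]; rewrite ?mulr1n ?mulr0n.
Qed.

Lemma unitmx_diag d : (diag_mx d \in unitmx) = [forall i, d 0 i != 0].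
Proof.
by rewrite unitmxE det_diag unitfE; apply/prodf_neq0/forallP => [h i|h i _]; apply: h.
Qed.

Lemma invmx_diag d :
  (forall i, d 0 i != 0) -> invmx (diag_mx d) = diag_mx (\row_i (d 0 i)^-1).
Proof.
move=> dnz; have dV : diag_mx d *m diag_mx (\row_i (d 0 i)^-1) = 1%:M.
  apply/matrixP => i j; rewrite mul_diag_mx !mxE.
  by case: eqVneq => [->|_]; rewrite ?mulr1n ?mulfV ?mulr0n ?mulr0.
by rewrite -[invmx _]mulmx1 -dV mulmxA mulVmx ?mul1mx ?unitmx_diag; last exact/forallP.
Qed.

Variable z : 'M[L]_n.
Hypotheses (z_diag : forall i j, i != j -> z i j = 0) (z_unit : z \in unitmx).

Lemma diagonal_unit_neq0 i : z i i != 0.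
Proof.
have := z_unit; rewrite [X in X \in unitmx](diag_mx_of_diagonal z_diag) unitmx_diag.
by move=> /forallP/(_ i); rewrite mxE.
Qed.

Lemma conj_diagE X i j : (z *m X *m invmx z) i j = z i i * X i j / z j j.
Proof.
rewrite [z in LHS](diag_mx_of_diagonal z_diag) invmx_diag => [|k]; last first.
  by rewrite mxE diagonal_unit_neq0.
by rewrite mul_diag_mx mul_mx_diag !mxE.
Qed.

Lemma conjV_diagE X i j : (invmx z *m X *m z) i j = (z i i)^-1 * X i j * z j j.
Proof.
rewrite [z in LHS](diag_mx_of_diagonal z_diag) invmx_diag => [|k]; last first.
  by rewrite mxE diagonal_unit_neq0.
by rewrite mul_diag_mx mul_mx_diag !mxE.
Qed.

End DiagonalConjugation.

Section PermutationConjugation.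
Variables (L : fieldType) (n : nat) (w : 'S_n).

Lemma pmxE : pmx L w = perm_mx w^-1.
Proof. by apply/matrixP => i j; rewrite !mxE (canF_eq (permKV w)). Qed.

Lemma invmx_perm_mx (s : 'S_n) : invmx (perm_mx s : 'M[L]_n) = perm_mx s^-1.
Proof.
by rewrite -[invmx _]mulmx1 -perm_mx1 -(mulgV s) perm_mxM mulmxA mulVmx ?unitmx_perm ?mul1mx.
Qed.

Lemma conj_invE (z : 'M[L]_n) i j : conj_inv w z i j = z (w i) (w j).
Proof. by rewrite /conj_inv pmxE invmx_perm_mx invgK -row_permE -col_permE !mxE. Qed.

Lemma unitmx_conj_inv (z : 'M[L]_n) : (conj_inv w z \in unitmx) = (z \in unitmx).
Proof. by rewrite /conj_inv pmxE !unitmx_mul unitmx_inv unitmx_perm andbT. Qed.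

Lemma Zcenter_conj_inv (S S' : rel 'I_n) (z : 'M[L]_n) :
  (forall i j, S' i j -> S (w i) (w j)) -> Zcenter S z -> Zcenter S' (conj_inv w z).
Proof.
move=> SS' [z_diag z_unit z_blk]; split; rewrite ?unitmx_conj_inv // => i j.
  by rewrite !conj_invE => ij; apply: z_diag; rewrite (inj_eq perm_inj).
by rewrite !conj_invE => /SS'; apply: z_blk.
Qed.

End PermutationConjugation.

Section ContractingCenter.
Variables (L : fieldType) (O : {pred L}) (pi : L) (n : nat).
Hypotheses (O0 : 0 \in O) (O1 : 1 \in O)
  (O_mul : forall x y, x \in O -> y \in O -> x * y \in O).

Definition integral_ratios (R S : rel 'I_n) (z : 'M[L]_n) :=
  forall i j : 'I_n, (i < j)%N -> R i j -> ~~ S i j -> z i i / z j j \in O.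

Lemma Zplus_integral_ratios R S z : Zplus R S O pi z -> integral_ratios R S z.
Proof.
case=> -[z_diag z_unit _] zN _ i j ij Rij Sij.
have nij : (i == j) = false by rewrite -val_eqE /= ltn_eqF.
pose X : 'M[L]_n := \matrix_(p, q) ((p == q) || (p == i) && (q == j))%:R.
have X_Nrad : Nrad R S O X.
  move=> p q; rewrite mxE; case: eqVneq => [_|_] //=.
  case: (boolP ((p == i) && (q == j))) => [/andP[/eqP-> /eqP->]|_].
    by rewrite ij Rij Sij.
  by case: ifP.
have := zN X X_Nrad i j; rewrite conj_diagE // mxE nij !eqxx ij Rij Sij /=.
by rewrite mulr1.
Qed.

Lemma Zplus_of_integral_ratios R S z : symmetric R -> symmetric S ->
  Zcenter S z -> integral_ratios R S z -> Zplus R S O pi z.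
Proof.
move=> R_sym S_sym zC ratios; have [z_diag z_unit _] := zC.
have z_neq0 := diagonal_unit_neq0 z_diag z_unit.
split=> // [X XN | Y YN] i j.
- rewrite conj_diagE //; have := XN i j; case: eqVneq => [<- ->|_].
    by rewrite mulr1 mulfV.
  case: ifP => [/and3P[ij Rij Sij] XO | _ ->]; last by rewrite mulr0 mul0r.
  by rewrite mulrAC mulrC; apply: O_mul => //; apply: ratios.
- rewrite conjV_diagE //; have := YN i j; case: eqVneq => [<- ->|_].
    by rewrite mulr1 mulVf.
  case: ifP => [/and3P[ji Rij Sij] [y [yO ->]] | _ ->]; last by rewrite mulr0 mul0r.
  exists (y * (z j j / z i i)); split.
    by apply: O_mul => //; apply: ratios => //; [rewrite R_sym | rewrite S_sym].
  by rewrite mulrCA -mulrA [_ * y]mulrC -mulrA [_^-1 * _]mulrC.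
Qed.

Lemma integral_ratios_conj_inv (R S R' S' : rel 'I_n) (w : 'S_n) (z : 'M[L]_n) :
  (forall i j : 'I_n, (i < j)%N -> R' i j -> ~~ S' i j ->
     [/\ (w i < w j)%N, R (w i) (w j) & ~~ S (w i) (w j)]) ->
  integral_ratios R S z -> integral_ratios R' S' (conj_inv w z).
Proof.
move=> w_roots ratios i j ij R'ij S'ij; have [wij Rw Sw] := w_roots i j ij R'ij S'ij.
by rewrite !conj_invE; apply: ratios.
Qed.

End ContractingCenter.

Theorem lemma4p17 (n : nat) (J J' : {set 'I_n.-1}) (nu : 'I_n -> int) (w : 'S_n) :
  cochar_in_center (blk J') nu ->
  dominant (fun _ _ => true) nu ->
  w \in minDCR J' J ->
  [/\ cochar_in_center (Mw_rel J J' w) (cochar_act (w^-1)%g nu),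
      dominant (blk J) (cochar_act (w^-1)%g nu) &
      forall (L : fieldType) (O : {pred L}) (pi : L), is_dvr O pi ->
        forall z : 'M[L]_n,
          Zplus (fun _ _ => true) (blk J') O pi z ->
          Zplus (blk J) (Mw_rel J J' w) O pi (conj_inv w z)].
Proof.
move=> nu_central nu_dom wmin; have w_incr := minDCR_increasing wmin.
split.
- by move=> i j /andP[_ blk'_ij]; rewrite /cochar_act invgK; apply: nu_central.
- by move=> i j ij blk_ij; rewrite /cochar_act invgK; apply: nu_dom => //; apply: w_incr.
move=> L O pi [[O0 O1 _ _ O_mul] _] z zplus; have [zC _ _] := zplus.
apply: Zplus_of_integral_ratios => //.
- exact: blk_sym.
- by move=> i j; rewrite /Mw_rel blk_sym [blk J' _ _]blk_sym.
- by apply: Zcenter_conj_inv zC => i j /andP[].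
apply: integral_ratios_conj_inv (Zplus_integral_ratios O0 O1 zplus) => i j ij blk_ij.
by rewrite /Mw_rel blk_ij => nblk'; split => //; apply: w_incr.
Qed.
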